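(* Let $T$ be a tiling and let $I=\{a,a+1,\dots,b\}$ with $2\le a\le b\le n-1$ be an interval contained in the basis $B(T)$. Then every triple $ijk\in\Lambda$ with $a-1\le i<j<k\le b+1$ belongs to $T$; i.e. $T(ext(I))\subseteq T$, where $ext(I)=\{a-1,\dots,b+1\}$ and $T(ext(I))$ is the set of all triples contained in $ext(I)$.
   Context: Fix an integer $n\ge 3$ and write $[n]=\{1,\dots,n\}$. Let $\Lambda$ be the set of 3-element subsets of $[n]$; a triple $\{i,j,k\}$ with $i<j<k$ is written $ijk$. For a 4-element subset $F=\{i<j<k<l\}$ of $[n]$, the stick of $F$ is the sequence $(ijk,\ ijl,\ ikl,\ jkl)$. A tiling (the inversion set of a rhombus tiling of the zonogon $Z(n;2)$) is a subset $T\subseteq\Lambda$ such that for every 4-element $F\subseteq[n]$, $T\cap\mathrm{stick}(F)$ is an initial segment or a final segment of the stick (empty set and whole stick allowed). The basis of a tiling $T$ is $B(T)=\{j\in\{2,\dots,n-1\}: (j-1)\,j\,(j+1)\in T\}$. *)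

From mathcomp Require Import all_boot.
Set Implicit Arguments. Unset Strict Implicit. Unset Printing Implicit Defensive.

(* A 3-subset {i<j<k} of [n] = {1..n} is encoded by the ordered triple (i,j,k).
   A candidate set T of triples is a boolean predicate on nat triples. *)
Definition in_Lambda (n i j k : nat) : bool := [&& 1 <= i, i < j, j < k & k <= n].

(* Stick of F = {i<j<k<l}: the sequence (ijk, ijl, ikl, jkl); here we record
   the membership pattern of T along the stick. *)
Definition stick_pattern (T : nat -> nat -> nat -> bool) (i j k l : nat) : seq bool :=
  [:: T i j k; T i j l; T i k l; T j k l].

Definition init_or_final (s : seq bool) : Prop :=
  exists m, m <= 4 /\
    (s = nseq m true ++ nseq (4 - m) false \/ s = nseq m false ++ nseq (4 - m) true).

Definition is_tiling (n : nat) (T : nat -> nat -> nat -> bool) : Prop :=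
  (forall i j k, T i j k -> in_Lambda n i j k) /\
  (forall i j k l, 1 <= i -> i < j -> j < k -> k < l -> l <= n ->
     init_or_final (stick_pattern T i j k l)).

Definition in_basis (n : nat) (T : nat -> nat -> nat -> bool) (j : nat) : bool :=
  [&& 2 <= j, j <= n - 1 & T j.-1 j j.+1].

From mathcomp Require Import all_boot zify.

(* Induction on the width k - i of a triple ijk.  Width 2 triples are the
   basis elements (m-1) m (m+1).  A wider triple ijk is an inner entry of a
   stick whose two end entries are narrower: the stick of {i, i+1, j, k} when
   j > i + 1, and that of {i, j, j+1, k} otherwise.  An initial or final
   segment of a stick containing both of its ends is the whole stick. *)

Lemma init_or_final_inner (x1 x2 x3 x4 : bool) :
  init_or_final [:: x1; x2; x3; x4] -> x1 -> x4 -> x2 && x3.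
Proof.
case=> m [m_le4 [] pat] x1T x4T;
  do 5 (case: m m_le4 pat => [|m] m_le4 pat; first by case: pat => *; subst);
  by [].
Qed.

Section TilingInterval.

Variables (n : nat) (T : nat -> nat -> nat -> bool).
Hypothesis tilingT : is_tiling n T.

Lemma tiling_stick_inner i p q r :
  1 <= i -> i < p -> p < q -> q < r -> r <= n ->
  T i p q -> T p q r -> T i p r /\ T i q r.
Proof.
move=> i_ge1 ip pq qr r_le Tipq Tpqr.
apply/andP; apply: init_or_final_inner Tipq Tpqr.
exact: tilingT.2.
Qed.

Lemma tiling_interval_full lo hi :
  1 <= lo -> hi <= n -> (forall m, lo < m < hi -> T m.-1 m m.+1) ->
  forall i j k, lo <= i -> i < j -> j < k -> k <= hi -> T i j k.
Proof.
move=> lo_ge1 hi_le Tbasis i j k.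
have [w] := ubnP (k - i); elim: w => // w IH in i j k *.
move=> width lo_i ij jk k_hi.
have IHw i' j' k' : k' - i' < k - i ->
    lo <= i' -> i' < j' -> j' < k' -> k' <= hi -> T i' j' k'.
  by move=> narrower; apply: IH; lia.
have [{ij} ji | ji1] := eqVneq j i.+1; first subst j.
  have [-> | ki2] := eqVneq k i.+2; first by apply: (Tbasis i.+1); lia.
  by apply: (@tiling_stick_inner i i.+1 i.+2 k _ _ _ _ _
               (IHw i i.+1 i.+2 _ _ _ _ _) (IHw i.+1 i.+2 k _ _ _ _ _)).1; lia.
by apply: (@tiling_stick_inner i i.+1 j k _ _ _ _ _
             (IHw i i.+1 j _ _ _ _ _) (IHw i.+1 j k _ _ _ _ _)).2; lia.
Qed.

End TilingInterval.

Theorem lemma5 (n : nat) (T : nat -> nat -> nat -> bool) (a b : nat) :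
  3 <= n -> is_tiling n T ->
  2 <= a -> a <= b -> b <= n - 1 ->
  (forall j, a <= j <= b -> in_basis n T j) ->
  forall i j k, a - 1 <= i -> i < j -> j < k -> k <= b + 1 -> T i j k.
Proof.
move=> _ tilingT a_ge2 a_le b_le basisI.
apply: (@tiling_interval_full n T tilingT (a - 1) (b + 1)); [lia | lia |].
move=> m m_in; have /basisI/and3P[] // : a <= m <= b by lia.
Qed.
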